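(* Let $E$ be a compact subset of $\mathbb{R}^2$. Then $E$ is purely unrectifiable if and only if $\lim_{\varepsilon \to 0} R_E(\varepsilon,r,M) = 0$ for all $r > 0$ and all $M > 0$.
   Context: A Lipschitz graph in $\mathbb{R}^2$ is a set $\Gamma = \{ x\omega_1 + F(x)\omega_2 : x \in \mathbb{R}\}$ where $\omega_1,\omega_2 \in S^1$ are orthonormal and $F:\mathbb{R}\to\mathbb{R}$ is Lipschitz. A set $E \subset \mathbb{R}^2$ is purely unrectifiable if for all orthonormal $\omega_1,\omega_2 \in S^1$ and all Lipschitz $F:\mathbb{R}\to\mathbb{R}$ one has $m(\{x \in \mathbb{R} : x\omega_1 + F(x)\omega_2 \in E\}) = 0$, where $m$ is Lebesgue measure on $\mathbb{R}$ (equivalently, $E\cap\Gamma$ has zero one-dimensional spherical (or Hausdorff) measure for every Lipschitz graph $\Gamma$). For $\varepsilon, r, M > 0$ the rectifiability constant is $$R_E(\varepsilon,r,M) = \sup \frac{m(\{x \in J : x\omega_1 + (F(x)+y)\omega_2 \in E \text{ for some } -\varepsilon \le y \le \varepsilon\})}{m(J)},$$ the supremum over all orthonormal $\omega_1,\omega_2 \in S^1$, all $F:\mathbb{R}\to\mathbb{R}$ with Lipschitz constant $\sup_{x\ne y}|F(x)-F(y)|/|x-y| \le M$, and all intervals $J \subset \mathbb{R}$ of length at least $r$. *)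

From HB Require Import structures.
From mathcomp Require Import all_boot all_order all_algebra.
From mathcomp Require Import all_classical all_reals all_analysis.
Set Implicit Arguments. Unset Strict Implicit. Unset Printing Implicit Defensive.
Import Order.TTheory GRing.Theory Num.Theory.
Import numFieldNormedType.Exports.
Local Open Scope classical_set_scope.
Local Open Scope ring_scope.

Section Defs.
Variable R : realType.

Definition orthonormal (w1 w2 : R * R) : Prop :=
  [/\ w1.1 ^+ 2 + w1.2 ^+ 2 = 1, w2.1 ^+ 2 + w2.2 ^+ 2 = 1
    & w1.1 * w2.1 + w1.2 * w2.2 = 0].

Definition graph_pt (w1 w2 : R * R) (F : R -> R) (x y : R) : R * R :=
  (x * w1.1 + (F x + y) * w2.1, x * w1.2 + (F x + y) * w2.2).

Definition lipschitz_with (F : R -> R) (M : R) : Prop :=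
  forall x y : R, `|F x - F y| <= M * `|x - y|.

Definition purely_unrectifiable (E : set (R * R)) : Prop :=
  forall (w1 w2 : R * R) (F : R -> R),
    orthonormal w1 w2 -> (exists L : R, lipschitz_with F L) ->
    (@lebesgue_measure R) [set x : R | E (graph_pt w1 w2 F x 0)] = 0%E.

Definition rect_const (E : set (R * R)) (eps r M : R) : \bar R :=
  ereal_sup [set z : \bar R | exists (w1 w2 : R * R) (F : R -> R) (a b : R),
    [/\ orthonormal w1 w2, lipschitz_with F M, r <= b - a &
      z = ((@lebesgue_measure R)
             [set x : R | (a <= x <= b)%R /\
                exists y : R, (-eps <= y <= eps)%R /\ E (graph_pt w1 w2 F x y)]
           * ((b - a)^-1)%:E)%E]].
End Defs.

From Pilot Require Import Defs.
From mathcomp Require Import all_boot all_order all_algebra.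
From mathcomp Require Import all_classical all_reals all_analysis.
From mathcomp Require Import ring lra measurable_realfun.
Import Order.TTheory GRing.Theory Num.Theory.
Import numFieldNormedType.Exports.
Local Open Scope classical_set_scope.
Local Open Scope ring_scope.

(* If the trace of E on a Lipschitz graph has positive measure, the strips
   around this graph meet E above a fixed proportion of an interval, whatever
   their width, so R_E does not tend to 0.

   Conversely, if R_E(eps, r, M) stays above c as eps -> 0, there are frames
   and M-Lipschitz graphs whose vertical 1/(n+1)-strips meet E above sets of
   measure at least c r.  Along an ultrafilter the frames converge and the
   graphs converge pointwise, hence uniformly on bounded sets since they are
   equi-Lipschitz.  Above the limit graph G, the closures of the sets of x
   whose graph point is 1/(j+1)-close to E decrease, have measure at least
   c r, and intersect inside the trace of the compact set E on G, which
   contradicts pure unrectifiability. *)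

(* [orthonormal] alone would refer to the sesquilinear-form predicate. *)
Local Notation orthonormal := Pilot.Defs.orthonormal.

Section RectifiabilityConstant.
Set Implicit Arguments.
Unset Strict Implicit.
Variable R : realType.
Implicit Types (E : set (R * R)) (F G : R -> R) (a b d x y r B K M eps kap : R).

Lemma orthonormal_coord_le1 (w1 w2 : R * R) : orthonormal w1 w2 ->
  [/\ `|w1.1| <= 1, `|w1.2| <= 1, `|w2.1| <= 1 & `|w2.2| <= 1].
Proof.
have le1 (u v : R) : u ^+ 2 + v ^+ 2 = 1 -> `|u| <= 1.
  by move=> h; rewrite ler_norml; apply/andP; split; nra.
case=> h1 h2 _; split; [exact: le1 h1| |exact: le1 h2|].
- by apply: (le1 _ w1.1); rewrite addrC.
- by apply: (le1 _ w2.1); rewrite addrC.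
Qed.

Lemma graph_ptK (w1 w2 : R * R) F x y : orthonormal w1 w2 ->
  (graph_pt w1 w2 F x y).1 * w1.1 + (graph_pt w1 w2 F x y).2 * w1.2 = x /\
  (graph_pt w1 w2 F x y).1 * w2.1 + (graph_pt w1 w2 F x y).2 * w2.2 = F x + y.
Proof.
case=> h1 h2 h12; rewrite /graph_pt /=; split.
- transitivity (x * (w1.1 ^+ 2 + w1.2 ^+ 2) + (F x + y) * (w1.1 * w2.1 + w1.2 * w2.2)).
    by ring.
  by rewrite h1 h12; ring.
- transitivity ((F x + y) * (w2.1 ^+ 2 + w2.2 ^+ 2) + x * (w1.1 * w2.1 + w1.2 * w2.2)).
    by ring.
  by rewrite h2 h12; ring.
Qed.

Lemma normr_comb_le (a b u v : R) : `|u| <= 1 -> `|v| <= 1 ->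
  `|a * u + b * v| <= `|a| + `|b|.
Proof.
move=> u1 v1; apply: le_trans (ler_normD _ _) _; rewrite !normrM.
by apply: lerD; rewrite -[leRHS]mulr1 ler_wpM2l.
Qed.

Lemma graph_pt_coord_le (w1 w2 : R * R) F x y : orthonormal w1 w2 ->
  let p := graph_pt w1 w2 F x y in
  `|x| <= `|p.1| + `|p.2| /\ `|F x + y| <= `|p.1| + `|p.2|.
Proof.
move=> ho p; have [b11 b12 b21 b22] := orthonormal_coord_le1 ho.
have [e1 e2] := graph_ptK F x y ho; rewrite -/p in e1 e2.
by split; [rewrite -e1|rewrite -e2]; apply: normr_comb_le.
Qed.

Lemma graph_pt_lipschitz (w1 w2 : R * R) G M x x' : orthonormal w1 w2 ->
  lipschitz_with G M ->
  `|graph_pt w1 w2 G x 0 - graph_pt w1 w2 G x' 0| <= (1 + M) * `|x - x'|.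
Proof.
move=> /orthonormal_coord_le1[b11 b12 b21 b22] hG.
have comb u v : `|u| <= 1 -> `|v| <= 1 ->
    `|(x * u + (G x + 0) * v) - (x' * u + (G x' + 0) * v)| <=
    (1 + M) * `|x - x'|.
  move=> u1 v1.
  rewrite (_ : _ - _ = (x - x') * u + (G x - G x') * v); last by ring.
  by apply: le_trans (normr_comb_le _ _ u1 v1) _; rewrite mulrDl mul1r lerD2l.
by rewrite prod_normE ge_max !comb.
Qed.

Lemma graph_pt_near (W1 W2 w1 w2 : R * R) G F x y d :
  `|w2.1| <= 1 -> `|w2.2| <= 1 -> `|W1 - w1| <= d -> `|W2 - w2| <= d ->
  `|G x - F x| <= d -> `|y| <= d ->
  `|graph_pt W1 W2 G x 0 - graph_pt w1 w2 F x y| <= (`|x| + `|G x| + 2) * d.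
Proof.
move=> b21 b22 hW1 hW2 hGF hy.
have comb U u V v : `|v| <= 1 -> `|U - u| <= d -> `|V - v| <= d ->
    `|(x * U + (G x + 0) * V) - (x * u + (F x + y) * v)| <=
    (`|x| + `|G x| + 2) * d.
  move=> v1 hU hV.
  rewrite (_ : _ - _ = x * (U - u) + G x * (V - v) + (G x - F x - y) * v);
    last by ring.
  have t1 : `|x * (U - u)| <= `|x| * d by rewrite normrM ler_wpM2l.
  have t2 : `|G x * (V - v)| <= `|G x| * d by rewrite normrM ler_wpM2l.
  have t3 : `|(G x - F x - y) * v| <= d + d.
    rewrite normrM -[leRHS]mulr1; apply: ler_pM => //.
    by apply: le_trans (ler_normB _ _) _; apply: lerD.
  have := ler_normD (x * (U - u) + G x * (V - v)) ((G x - F x - y) * v).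
  have := ler_normD (x * (U - u)) (G x * (V - v)).
  rewrite (_ : _ * d = `|x| * d + `|G x| * d + (d + d)); last by ring.
  lra.
have coord_le (z : R * R) : `|z| <= d -> `|z.1| <= d /\ `|z.2| <= d.
  by rewrite prod_normE ge_max => /andP.
have [h11 h12] := coord_le _ hW1; have [h21 h22] := coord_le _ hW2.
by rewrite prod_normE ge_max !comb.
Qed.

Lemma lebesgue_measure_le (A B : set R) : A `<=` B ->
  (lebesgue_measure A <= lebesgue_measure B)%E.
Proof.
move=> AB; rewrite /lebesgue_measure /lebesgue_stieltjes_measure /measure_extension.
exact: le_outer_measure.
Qed.

Lemma compact_coord_bounded E : compact E ->
  exists2 B : R, 0 < B & forall p, E p -> `|p.1| <= B /\ `|p.2| <= B.
Proof.
move=> /compact_bounded[M0 [_ hM0]].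
exists (Num.max (M0 + 1) 1); first by rewrite lt_max ltr01 orbT.
move=> p Ep; have : `|p| <= Num.max (M0 + 1) 1.
  by apply: hM0 Ep; rewrite lt_max ltrDl ltr01.
by rewrite prod_normE ge_max => /andP[-> ->].
Qed.

Lemma lipschitz_normr_le F M x y : lipschitz_with F M ->
  `|F x| <= `|F y| + M * `|x - y|.
Proof. by move=> hF; rewrite -lerBlDl; apply: le_trans (lerB_dist _ _) (hF x y). Qed.

Definition strip_trace E (w1 w2 : R * R) F (eps : R) : set R :=
  [set x | exists y, `|y| <= eps /\ E (graph_pt w1 w2 F x y)].

Lemma strip_trace_bounded E B (w1 w2 : R * R) F eps x : orthonormal w1 w2 ->
  (forall p, E p -> `|p.1| <= B /\ `|p.2| <= B) ->
  strip_trace E w1 w2 F eps x -> `|x| <= B + B /\ `|F x| <= B + B + eps.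
Proof.
move=> ho EB [y [hy /EB[p1 p2]]].
have [hx hxy] := graph_pt_coord_le F x y ho.
split; first exact: le_trans hx (lerD p1 p2).
rewrite -[F x](addrK y); apply: le_trans (ler_normB _ _) _.
exact: lerD (le_trans hxy (lerD p1 p2)) hy.
Qed.

Lemma strip_trace_at0_le E B (w1 w2 : R * R) F M eps x : orthonormal w1 w2 ->
  (forall p, E p -> `|p.1| <= B /\ `|p.2| <= B) -> lipschitz_with F M ->
  0 <= M -> eps <= 1 -> strip_trace E w1 w2 F eps x ->
  `|F 0| <= B + B + 1 + M * (B + B).
Proof.
move=> ho EB hF M0 eps1 /(strip_trace_bounded ho EB)[x_le Fx_le].
apply: le_trans (lipschitz_normr_le 0 x hF) _; rewrite sub0r normrN.
by apply: lerD; [apply: le_trans Fx_le _; rewrite lerD2l|exact: ler_wpM2l].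
Qed.

Lemma strip_trace_sub_near E B K d (W1 W2 w1 w2 : R * R) G F eps :
  orthonormal w1 w2 -> (forall p, E p -> `|p.1| <= B /\ `|p.2| <= B) ->
  `|W1 - w1| <= d -> `|W2 - w2| <= d -> eps <= d ->
  (forall x, `|x| <= B + B -> `|G x| <= K /\ `|G x - F x| <= d) ->
  strip_trace E w1 w2 F eps `<=` [set x | `|x| <= B + B /\
    exists2 p, E p & `|graph_pt W1 W2 G x 0 - p| <= (B + B + K + 2) * d].
Proof.
move=> ho EB hW1 hW2 eps_d GF x Sx; have [x_le _] := strip_trace_bounded ho EB Sx.
have [Gx_le GFx] := GF x x_le; case: Sx => y [hy Ey].
split => //; exists (graph_pt w1 w2 F x y) => //.
have [_ _ b21 b22] := orthonormal_coord_le1 ho.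
apply: le_trans (graph_pt_near b21 b22 hW1 hW2 GFx (le_trans hy eps_d)) _.
apply: ler_wpM2r; first exact: le_trans (normr_ge0 _) GFx.
by rewrite lerD2r; apply: lerD.
Qed.

Lemma rect_const_ge E eps r M (w1 w2 : R * R) F a b : 0 <= eps -> 0 <= r ->
  orthonormal w1 w2 -> lipschitz_with F M -> r <= b - a ->
  (lebesgue_measure [set x | (a <= x <= b)%R /\ E (graph_pt w1 w2 F x 0)] *
     ((b - a)^-1)%:E <= rect_const E eps r M)%E.
Proof.
move=> eps0 r0 ho hF hr; apply: le_ereal_sup_tmp; eexists.
  by exists w1, w2, F, a, b; split.
apply: lee_wpmul2r; first by rewrite lee_fin invr_ge0 (le_trans r0).
apply: lebesgue_measure_le => x [xab Ex]; split => //.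
by exists 0; split; rewrite // oppr_le0 eps0.
Qed.

Lemma rect_const_ge0 E eps r M : 0 <= eps -> 0 <= r -> 0 <= M ->
  (0 <= rect_const E eps r M)%E.
Proof.
move=> eps0 r0 M0; apply: le_trans (@rect_const_ge E eps r M (1, 0) (0, 1)
  (fun=> 0) 0 r eps0 r0 _ _ _).
- by apply: mule_ge0 => //; rewrite lee_fin invr_ge0 subr0.
- by split => /=; ring.
- by move=> x y; rewrite subrr normr0 mulr_ge0.
- by rewrite subr0.
Qed.

Lemma rect_const_le E eps r M kap : 0 < r -> 0 <= kap ->
  (forall w1 w2 F, orthonormal w1 w2 -> lipschitz_with F M ->
     (lebesgue_measure (strip_trace E w1 w2 F eps) <= kap%:E)%E) ->
  (rect_const E eps r M <= (kap / r)%:E)%E.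
Proof.
move=> r0 kap0 thin; apply: ge_ereal_sup => _ [w1 [w2 [F [a [b [ho hF hr ->]]]]]].
have ba0 : 0 < b - a := lt_le_trans r0 hr.
apply: (@le_trans _ _ (kap%:E * ((b - a)^-1)%:E)%E).
  apply: lee_wpmul2r; first by rewrite lee_fin invr_ge0 ltW.
  apply: le_trans (thin _ _ _ ho hF); apply: lebesgue_measure_le.
  by move=> x [_ [y [/andP[y1 y2] Ey]]]; exists y; rewrite ler_norml y1 y2.
by rewrite -EFinM lee_fin ler_wpM2l // lef_pV2 ?posrE.
Qed.

Lemma purely_unrectifiable_of_rect_const_cvg0 E : compact E ->
  (forall r M : R, 0 < r -> 0 < M ->
     rect_const E e r M @[e --> 0^'+] --> 0%E) ->
  purely_unrectifiable E.
Proof.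
move=> cE Rcvg0 w1 w2 F ho [L hL].
have [B B0 EB] := compact_coord_bounded cE.
set M := Num.max L 1.
have M0 : 0 < M by rewrite lt_max ltr01 orbT.
have hM : lipschitz_with F M.
  by move=> x y; apply: le_trans (hL x y) _; rewrite ler_wpM2r // le_max lexx.
set T := [set x | E (graph_pt w1 w2 F x 0)].
have TB : T = [set x | - (B + B) <= x <= B + B /\ E (graph_pt w1 w2 F x 0)].
  apply/seteqP; split => [x Tx|x [] //]; split => //.
  have [p1 p2] := EB _ Tx; have [hx _] := graph_pt_coord_le F x 0 ho.
  by rewrite -ler_norml (le_trans hx) // lerD.
set r := B + B - - (B + B).
have r0 : 0 < r by rewrite /r; lra.
have : (lebesgue_measure T * (r^-1)%:E <= 0)%E.
  apply: cvge_to_ge (Rcvg0 r M r0 M0) _.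
  by near=> e; rewrite TB; apply: rect_const_ge => //; exact: ltW.
rewrite pmule_lle0 ?lte_fin ?invr_gt0 // => T_le0.
by apply/eqP; rewrite eq_le T_le0 measure_ge0.
Unshelve. all: by end_near.
Qed.

Lemma ultra_cvg_bounded (I : Type) (U : set_system I) (s : I -> R) (K : R) :
  UltraFilter U -> (forall i, `|s i| <= K) -> exists l : R, s @ U --> l.
Proof.
move=> UU sK; have cK := @segment_compact R (- K) K (s @ U) _.
have /cK[l [_ cl]] : (s @ U) `[- K, K]%classic.
  rewrite /fmap /=; apply: filterS (@filterT _ U _) => i _ /=.
  by rewrite in_itv /= -ler_norml.
exists l => V Vl; have [//|nV] := in_ultra_setVsetC (s @^-1` V) UU.
by have [z []] := cl (~` V) V nV Vl.
Qed.

Lemma cvg_coord_pair (I : Type) (U : set_system I) (w : I -> R * R) a b :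
  Filter U -> (fun i => (w i).1) @ U --> a -> (fun i => (w i).2) @ U --> b ->
  w @ U --> (a, b).
Proof.
move=> FU /cvgrPdist_le wa /cvgrPdist_le wb; apply/cvgrPdist_le => e e0.
by near=> i; rewrite prod_normE ge_max; apply/andP; split; near: i; [exact: wa|exact: wb].
Unshelve. all: by end_near.
Qed.

Lemma ultralimit_frame (I : Type) (U : set_system I) (w1 w2 : I -> R * R)
    (F : I -> R -> R) (M K : R) :
  UltraFilter U -> (forall i, orthonormal (w1 i) (w2 i)) ->
  (forall i, lipschitz_with (F i) M) -> (forall i, `|F i 0| <= K) ->
  exists W1 W2 G, [/\ orthonormal W1 W2, lipschitz_with G M,
    w1 @ U --> W1, w2 @ U --> W2 & forall x, F ^~ x @ U --> G x].
Proof.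
move=> UU ho hF F0K.
have cvg_coord (s : I -> R) : (forall i, `|s i| <= 1) -> exists l : R, s @ U --> l.
  by move=> s1; exact: ultra_cvg_bounded UU s1.
have coord_le i := orthonormal_coord_le1 (ho i).
have [a11 h11] : exists l : R, (fun i => (w1 i).1) @ U --> l.
  by apply: cvg_coord => i; case: (coord_le i).
have [a12 h12] : exists l : R, (fun i => (w1 i).2) @ U --> l.
  by apply: cvg_coord => i; case: (coord_le i).
have [a21 h21] : exists l : R, (fun i => (w2 i).1) @ U --> l.
  by apply: cvg_coord => i; case: (coord_le i).
have [a22 h22] : exists l : R, (fun i => (w2 i).2) @ U --> l.
  by apply: cvg_coord => i; case: (coord_le i).
have [G hG] : {G : R -> R & forall x, F ^~ x @ U --> G x}.
  apply: (choice (P := fun x l => F ^~ x @ U --> l)) => x.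
  apply: (ultra_cvg_bounded (K := K + M * `|x|) UU) => i.
  by apply: le_trans (lipschitz_normr_le x 0 (hF i)) _; rewrite subr0 lerD2r.
have cvg_eq (s : I -> R) a b : s @ U --> a -> (forall i, s i = b) -> a = b.
  move=> sa sb; apply/eqP; rewrite eq_le; apply/andP; split.
  - by apply: (cvgr_to_le sa); apply: nearW => i; rewrite sb.
  - by apply: (cvgr_to_ge sa); apply: nearW => i; rewrite sb.
exists (a11, a12), (a21, a22), G; split.
- split => /=.
  + apply: cvg_eq (cvgD (cvgM h11 h11) (cvgM h12 h12)) _ => i /=.
    by case: (ho i) => <- _ _; rewrite !expr2.
  + apply: cvg_eq (cvgD (cvgM h21 h21) (cvgM h22 h22)) _ => i /=.
    by case: (ho i) => _ <- _; rewrite !expr2.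
  + by apply: cvg_eq (cvgD (cvgM h11 h21) (cvgM h12 h22)) _ => i; case: (ho i).
- move=> x y; apply: cvgr_to_le (cvg_norm (cvgB (hG x) (hG y))) _.
  exact: nearW (fun i => hF i x y).
- exact: cvg_coord_pair h11 h12.
- exact: cvg_coord_pair h21 h22.
- exact: hG.
Qed.

Lemma grid_cover (a h x : R) (N : nat) : 0 < h -> a <= x <= a + N%:R * h ->
  exists2 i : nat, (i <= N)%N & `|x - (a + i%:R * h)| <= h.
Proof.
move=> h0; elim: N x => [|N IH] x /andP[ax xN].
  exists 0%N => //; rewrite mul0r addr0 in xN *.
  by rewrite (@le_anti _ _ x a) ?ax ?xN // subrr normr0 ltW.
have [xN'|xN'] := leP x (a + N%:R * h).
  by have [i iN hi] := IH x (introT andP (conj ax xN')); exists i => //; exact: leqW.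
exists N.+1 => //; rewrite -addn1 natrD in xN *; rewrite distrC ger0_norm; lra.
Qed.

Lemma equilipschitz_cvg_uniform (I : Type) (U : set_system I) (F : I -> R -> R)
    G (M X d : R) :
  Filter U -> 0 < M -> 0 < d ->
  (forall i, lipschitz_with (F i) M) -> lipschitz_with G M ->
  (forall x, F ^~ x @ U --> G x) ->
  \forall i \near U, forall x, `|x| <= X -> `|G x - F i x| <= d.
Proof.
move=> UF M0 d0 hF hG FG.
have [X0|X0] := ltP X 0.
  apply: nearW => i x hx.
  by have := le_lt_trans (normr_ge0 x) (le_lt_trans hx X0); rewrite ltxx.
(* A grid of mesh [h] on [-X, X]: an M-Lipschitz function varies by at most
   [d / 4] between a point and its nearest node. *)
set h := d / (4 * M).
have h0 : 0 < h by rewrite divr_gt0 // mulr_gt0.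
have Mh : M * h = d / 4 by rewrite /h; field; rewrite gt_eqF.
set N := Num.Def.archi_bound ((X + X) / h).
have NX : X + X <= N%:R * h.
  rewrite -ler_pdivrMr //; apply/ltW/archi_boundP.
  by rewrite divr_ge0 ?addr_ge0 // ltW.
set g := fun k : 'I_N.+1 => - X + k%:R * h.
have : \forall i \near U, forall k : 'I_N.+1, `|G (g k) - F i (g k)| <= d / 2.
  apply: filter_forall => k.
  by have /cvgrPdist_le := FG (g k); apply; rewrite divr_gt0.
apply: filterS => i near_grid x hx.
have [k kN hk] : exists2 k : nat, (k <= N)%N & `|x - (- X + k%:R * h)| <= h.
  by apply: grid_cover => //; move: hx; rewrite ler_norml => /andP[? ?]; lra.
have := near_grid (Ordinal (n := N.+1) (m := k) kN); rewrite /g /= => hgk.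
set gk := - X + k%:R * h in hk hgk.
have e1 : `|G x - G gk| <= d / 4.
  by rewrite -Mh; apply: le_trans (hG _ _) _; apply: ler_wpM2l => //; exact: ltW.
have e2 : `|F i gk - F i x| <= d / 4.
  by rewrite -Mh distrC; apply: le_trans (hF _ _ _) _; apply: ler_wpM2l => //; exact: ltW.
have := ler_distD (G gk) (G x) (F i x); have := ler_distD (F i gk) (G gk) (F i x).
lra.
Qed.

Lemma closed_mem_of_closure_approx E (g : R -> R * R) (K x : R) :
  closed E -> 0 <= K -> (forall x', `|g x - g x'| <= K * `|x - x'|) ->
  (forall j : nat, closure [set x' | exists2 p, E p & `|g x' - p| <= j.+1%:R^-1] x) ->
  E (g x).
Proof.
move=> clE K0 gK xcl; rewrite (closure_id E).1 // => V /nbhs_ballP[eps /= eps0 epsV].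
have eps20 : 0 < eps / 2 by rewrite divr_gt0.
have [j _ j_lt] := near_infty_natSinv_lt (PosNum eps20).
set rho := eps / 2 / (K + 1).
have rho0 : 0 < rho by rewrite divr_gt0 // ltr_pwDr.
have [x' [[p Ep x'p] xx']] := xcl j _ (nbhsx_ballx x rho rho0).
exists p; split => //; apply: epsV; rewrite -ball_normE /=.
have xx'_le : K * `|x - x'| <= eps / 2.
  apply: le_trans (_ : K * rho <= _); first by rewrite ler_wpM2l // ltW.
  by rewrite /rho mulrA ler_pdivrMr ?ltr_pwDr //; nra.
apply: le_lt_trans (ler_distD (g x') _ _) _; rewrite [ltRHS]splitr.
apply: ler_ltD; first exact: le_trans (gK x') xx'_le.
exact: le_lt_trans x'p (j_lt j (leqnn j)).
Qed.

Lemma lebesgue_bigcap_closure_ge (a b : R) (A : (set R)^nat) (kap : \bar R) :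
  {homo A : i j / (i <= j)%N >-> (j <= i)%O} ->
  (forall j, kap <= lebesgue_measure (`[a, b] `&` closure (A j)))%E ->
  (kap <= lebesgue_measure (\bigcap_j (`[a, b] `&` closure (A j))))%E.
Proof.
move=> decrA kapN; set N := fun j => `[a, b]%classic `&` closure (A j).
have mN j : measurable (N j).
  exact: measurableI (measurable_itv _) (closed_measurable (@closed_closure _ _)).
have decrN : {homo N : i j / (i <= j)%N >-> (j <= i)%O}.
  move=> i j /decrA/subsetPset Aji; apply/subsetPset.
  by apply: setIS; apply: closureS.
have N0 : (lebesgue_measure (N 0%N) < +oo)%E.
  apply: le_lt_trans (lebesgue_measure_le (@subIsetl _ _ _)) _.
  by rewrite lebesgue_measure_itv; case: ifP => _; rewrite ?ltry.
have := nonincreasing_cvg_mu N0 mN (bigcapT_measurable mN) decrN.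
by move/cvge_to_ge; apply; apply: nearW.
Qed.

Lemma no_thick_strips E M kap (w1 w2 : nat -> R * R) (F : nat -> R -> R) :
  compact E -> purely_unrectifiable E -> 0 < M -> 0 < kap ->
  (forall n, orthonormal (w1 n) (w2 n)) -> (forall n, lipschitz_with (F n) M) ->
  ~ (forall n,
       kap%:E < lebesgue_measure (strip_trace E (w1 n) (w2 n) (F n) n.+1%:R^-1))%E.
Proof.
move=> cE PU M0 kap0 ho hF thick.
have [B B0 EB] := compact_coord_bounded cE.
have F0_le n : `|F n 0| <= B + B + 1 + M * (B + B).
  have [x Sx] : strip_trace E (w1 n) (w2 n) (F n) n.+1%:R^-1 !=set0.
    apply/set0P/eqP => S0; move: (thick n).
    by rewrite S0 measure0 lte_fin ltNge ltW.
  by apply: strip_trace_at0_le (ho n) EB (hF n) (ltW M0) _ Sx; rewrite invf_le1 ?ler1n.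
have [U [UU ooU]] := ultraFilterLemma (F := \oo) _.
have [W1 [W2 [G [hoW hG w1W1 w2W2 FG]]]] := ultralimit_frame UU ho hF F0_le.
set g := fun x => graph_pt W1 W2 G x 0.
set A := fun j : nat => [set x | exists2 p, E p & `|g x - p| <= j.+1%:R^-1].
set N := fun j => `[- (B + B), B + B]%classic `&` closure (A j).
have N_thick j : (kap%:E < lebesgue_measure (N j))%E.
  set KG := `|G 0| + M * (B + B).
  have KG0 : 0 <= KG by rewrite addr_ge0 // mulr_ge0 ?addr_ge0 // ltW.
  set d := j.+1%:R^-1 / (B + B + KG + 2).
  have d0 : 0 < d by rewrite divr_gt0 //; lra.
  have dj : (B + B + KG + 2) * d = j.+1%:R^-1 by rewrite /d mulrC mulfVK //; lra.
  have /filter_ex[n [w1n w2n nd FGn]] : \forall n \near U,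
      [/\ `|W1 - w1 n| <= d, `|W2 - w2 n| <= d, n.+1%:R^-1 <= d &
        forall x, `|x| <= B + B -> `|G x - F n x| <= d].
    near=> n; split; near: n.
    - by move/cvgrPdist_le : w1W1; apply.
    - by move/cvgrPdist_le : w2W2; apply.
    - apply: ooU; apply: filterS (near_infty_natSinv_lt (PosNum d0)).
      by move=> n /ltW.
    - exact: equilipschitz_cvg_uniform _ M0 d0 hF hG FG.
  apply: lt_le_trans (thick n) (lebesgue_measure_le _) => x Sx.
  have [x_le gx_near] : `|x| <= B + B /\ exists2 p, E p & `|g x - p| <= j.+1%:R^-1.
    rewrite -dj; apply: strip_trace_sub_near (ho n) EB w1n w2n nd _ x Sx => x' x'_le.
    split; last exact: FGn.
    apply: le_trans (lipschitz_normr_le x' 0 hG) _.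
    by rewrite subr0 lerD2l; apply: ler_wpM2l; [exact: ltW|exact: x'_le].
  by split; [rewrite /= in_itv /= -ler_norml|exact: subset_closure].
have N_trace : \bigcap_j N j `<=` [set x | E (g x)].
  move=> x Nx; apply: (closed_mem_of_closure_approx _ (K := 1 + M)).
  - exact: compact_closed cE.
  - by rewrite addr_ge0 // ltW.
  - by move=> x'; exact: graph_pt_lipschitz.
  - by move=> j; case: (Nx j I).
have A_decr : {homo A : i j / (i <= j)%N >-> (j <= i)%O}.
  move=> i j ij; apply/subsetPset => x [p Ep gxp]; exists p => //.
  by apply: le_trans gxp _; rewrite lef_pV2 ?posrE // ler_nat.
have := lebesgue_bigcap_closure_ge A_decr (fun j => ltW (N_thick j)).
move/le_trans/(_ (lebesgue_measure_le N_trace)).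
by rewrite (PU _ _ _ hoW (ex_intro _ M hG)) lee_fin leNgt kap0.
Unshelve. all: by end_near.
Qed.

Lemma strip_trace_small E M kap : compact E -> purely_unrectifiable E ->
  0 < M -> 0 < kap ->
  exists n : nat, forall w1 w2 F, orthonormal w1 w2 -> lipschitz_with F M ->
    (lebesgue_measure (strip_trace E w1 w2 F n.+1%:R^-1) <= kap%:E)%E.
Proof.
move=> cE PU M0 kap0; apply: contrapT => not_small.
have thick n : exists t : (R * R) * (R * R) * (R -> R),
    [/\ orthonormal t.1.1 t.1.2, lipschitz_with t.2 M &
      (kap%:E < lebesgue_measure (strip_trace E t.1.1 t.1.2 t.2 n.+1%:R^-1))%E].
  apply: contrapT => thin; apply: not_small; exists n => w1 w2 F ho hF.
  by rewrite leNgt; apply/negP => kap_lt; apply: thin; exists (w1, w2, F).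
have [t ht] := choice thick.
apply: (@no_thick_strips E M kap (fun n => (t n).1.1) (fun n => (t n).1.2)
  (fun n => (t n).2) cE PU M0 kap0) => n; by case: (ht n).
Qed.

Lemma cvge0_of_le (T : Type) (F : set_system T) (f : T -> \bar R) : Filter F ->
  (\forall t \near F, 0 <= f t)%E ->
  (forall c : R, 0 < c -> \forall t \near F, (f t <= c%:E)%E) -> f @ F --> 0%E.
Proof.
move=> FF f0 fc; have fin t : (0 <= f t)%E -> (f t <= 1%:E)%E -> f t \is a fin_num.
  by move=> f0t ft1; rewrite ge0_fin_numE // (le_lt_trans ft1) ?ltry.
apply/fine_cvgP; split; first exact: filterS2 fin f0 (fc 1 ltr01).
apply/cvgrPdist_le => c c0; apply: filterS2 _ f0 (filterI (fc c c0) (fc 1 ltr01)).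
move=> t f0t [ftc ft1]; rewrite sub0r normrN ger0_norm ?fine_ge0 //.
by rewrite -lee_fin fineK ?fin.
Qed.

Lemma rect_const_cvg0 E r M : compact E -> purely_unrectifiable E ->
  0 < r -> 0 < M -> rect_const E e r M @[e --> 0^'+] --> 0%E.
Proof.
move=> cE PU r0 M0; apply: cvge0_of_le.
  near=> e; apply: rect_const_ge0; [|exact: ltW|exact: ltW].
  by near: e; exact: nbhs_right_ge.
move=> c c0; have [n thin] := strip_trace_small cE PU M0 (mulr_gt0 c0 r0).
near=> e; rewrite -[c](mulfK (lt0r_neq0 r0)).
apply: rect_const_le => // [|w1 w2 F ho hF]; first by rewrite ltW ?mulr_gt0.
apply: le_trans (thin w1 w2 F ho hF); apply: lebesgue_measure_le.
move=> x [y [ye Ey]]; exists y; split => //; apply: le_trans ye _.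
by near: e; apply: nbhs_right_le; rewrite invr_gt0.
Unshelve. all: by end_near.
Qed.

End RectifiabilityConstant.

Theorem proposition1p9 (R : realType) (E : set (R * R)) :
  compact E ->
  (purely_unrectifiable E <->
   (forall r M : R, 0 < r -> 0 < M ->
      rect_const E e r M @[e --> 0^'+] --> 0%E)).
Proof.
move=> cE; split => [PU r M|]; first exact: rect_const_cvg0.
exact: purely_unrectifiable_of_rect_const_cvg0.
Qed.
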